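(* Let $G$ be a second countable, locally compact, Hausdorff étale groupoid and let $\rho\colon G\to G/\mathrm{Iso}(G)$ be the quotient map. The following are equivalent: (1) $\mathrm{Iso}(G)$ is open in $G$; (2) $u\mapsto G(u)$ is continuous; (3) $(G/\mathrm{Iso}(G))^{(0)}$ is open in $G/\mathrm{Iso}(G)$; (4) $\rho$ is open. If these equivalent conditions hold, then $G/\mathrm{Iso}(G)$ is an étale groupoid.
   Context: Étale: range and source maps are local homeomorphisms (counting measure Haar system). $G(u)=\{\gamma: r(\gamma)=s(\gamma)=u\}$, $\mathrm{Iso}(G)=\bigcup_u G(u)$. Continuity of $u\mapsto G(u)$ is with respect to the Fell topology on the closed subsets of $G$. $G/\mathrm{Iso}(G)$ is the orbit space of the free proper right action of $\mathrm{Iso}(G)$ on $G$, with the quotient topology and the groupoid structure making $\rho$ a homomorphism. *)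

From HB Require Import structures.
From mathcomp Require Import all_boot all_order all_algebra.
From mathcomp Require Import all_classical all_reals all_analysis.
Set Implicit Arguments. Unset Strict Implicit. Unset Printing Implicit Defensive.
Local Open Scope classical_set_scope.
Local Open Scope quotient_scope.

Record groupoid (G : Type) := Groupoid {
  gunit : set G;
  grng : G -> G;
  gsrc : G -> G;
  gmul : G -> G -> G;
  ginv : G -> G;
  rng_unit : forall g, gunit (grng g);
  src_unit : forall g, gunit (gsrc g);
  unit_rng : forall u, gunit u -> grng u = u;
  unit_src : forall u, gunit u -> gsrc u = u;
  rng_mul : forall g h, gsrc g = grng h -> grng (gmul g h) = grng g;
  src_mul : forall g h, gsrc g = grng h -> gsrc (gmul g h) = gsrc h;
  mulA : forall g h k, gsrc g = grng h -> gsrc h = grng k ->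
    gmul (gmul g h) k = gmul g (gmul h k);
  mul_rng : forall g, gmul (grng g) g = g;
  mul_src : forall g, gmul g (gsrc g) = g;
  rng_inv : forall g, grng (ginv g) = gsrc g;
  src_inv : forall g, gsrc (ginv g) = grng g;
  mulgV : forall g, gmul g (ginv g) = grng g;
  mulVg : forall g, gmul (ginv g) g = gsrc g
}.

Section Defs.
Context {G : topologicalType} (Gr : groupoid G).

Definition composable : set (G * G) :=
  [set p | gsrc Gr p.1 = grng Gr p.2].

Definition rel_open (A B : set G) := exists V : set G, open V /\ B = V `&` A.

Definition local_homeo_onto (X : set G) (f : G -> G) :=
  (forall g, X (f g)) /\
  forall g, exists U : set G,
    [/\ open U, U g, {in U &, injective f}, {within U, continuous f} &
        forall V, open V -> V `<=` U -> rel_open X (f @` V)].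

Definition topological_groupoid :=
  {within composable, continuous (fun p : G * G => gmul Gr p.1 p.2)} /\
  continuous (ginv Gr).

Definition etale_groupoid :=
  topological_groupoid /\
  local_homeo_onto (gunit Gr) (grng Gr) /\ local_homeo_onto (gunit Gr) (gsrc Gr).

Definition Iso : set G := [set g | grng Gr g = gsrc Gr g].
Definition isotropy (u : G) : set G := [set g | grng Gr g = u /\ gsrc Gr g = u].

(* continuity of u |-> G(u) from G^(0) to the closed subsets of G with the Fell
   topology: preimages of the subbasic Fell-open sets
   {C | C ∩ K = ∅} (K compact) and {C | C ∩ U ≠ ∅} (U open) are open in G^(0). *)
Definition isotropy_fell_continuous :=
  (forall K : set G, compact K ->
     rel_open (gunit Gr) [set u | gunit Gr u /\ isotropy u `&` K = set0]) /\
  (forall U : set G, open U ->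
     rel_open (gunit Gr) [set u | gunit Gr u /\ isotropy u `&` U !=set0]).

(* orbit relation of the right action of Iso(G) on G:
   g ~ h  iff  h = g a for some a in Iso(G) with s g = r a,
   which is equivalent to r g = r h /\ s g = s h. *)
Definition iso_orbit_rel (g h : G) : bool :=
  `[< exists a, [/\ Iso a, gsrc Gr g = grng Gr a & h = gmul Gr g a] >].

Lemma iso_orbit_relE g h :
  iso_orbit_rel g h <-> (grng Gr g = grng Gr h /\ gsrc Gr g = gsrc Gr h).
Proof.
rewrite /iso_orbit_rel; split.
  move/asboolP=> [a [Ia sga ->]]; rewrite rng_mul // src_mul //.
  by split => //; rewrite sga.
move=> [rr ss]; apply/asboolP; exists (gmul Gr (ginv Gr g) h).
have c : gsrc Gr (ginv Gr g) = grng Gr h by rewrite src_inv.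
split.
- by rewrite /Iso /= rng_mul // src_mul // rng_inv.
- by rewrite rng_mul // rng_inv.
- rewrite -mulA ?rng_inv // mulgV rr mul_rng //.
Qed.

Lemma iso_orbit_refl : reflexive iso_orbit_rel.
Proof. by move=> x; apply/iso_orbit_relE. Qed.
Lemma iso_orbit_sym : symmetric iso_orbit_rel.
Proof.
by move=> x y; apply/idP/idP => /iso_orbit_relE [r1 s1]; apply/iso_orbit_relE.
Qed.
Lemma iso_orbit_trans : transitive iso_orbit_rel.
Proof.
move=> y x z /iso_orbit_relE [r1 s1] /iso_orbit_relE [r2 s2].
by apply/iso_orbit_relE; split; congruence.
Qed.

Definition iso_orbit_equiv_rel : equiv_rel G := EquivRel iso_orbit_rel iso_orbit_refl iso_orbit_sym iso_orbit_trans.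

Definition orbit_space := quotient_topology {eq_quot iso_orbit_equiv_rel}.

Definition rho : G -> orbit_space := \pi_orbit_space.

End Defs.

Definition groupoid_hom {G Q : Type} (Gr : groupoid G) (H : groupoid Q) (f : G -> Q) :=
  [/\ gunit H = f @` gunit Gr,
      forall g, grng H (f g) = f (grng Gr g),
      forall g, gsrc H (f g) = f (gsrc Gr g),
      forall g h, gsrc Gr g = grng Gr h -> f (gmul Gr g h) = gmul H (f g) (f h) &
      forall g, f (ginv Gr g) = ginv H (f g)].

Definition open_map {X Y : topologicalType} (f : X -> Y) :=
  forall U : set X, open U -> open (f @` U).

From Pilot Require Import Defs.
From HB Require Import structures.
From mathcomp Require Import all_boot all_order all_algebra.
From mathcomp Require Import all_classical all_reals all_analysis.
Local Open Scope classical_set_scope.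

(* Since [G] is étale, [r] and [s] are continuous open maps and [G^(0)] is
   open.  Two arrows have the same image under [rho] exactly when they have
   the same range and source, so [rho^-1 (rho G^(0)) = Iso(G)], which gives
   (1) <-> (3), and (4) -> (3) trivially.  If [Iso(G)] is open and [g = h b]
   with [g] in an open [U] and [b] isotropy, then for [h'] near [h] the open
   set [r(Iso(G) near b)] contains [s h'], which yields an isotropy arrow [b']
   near [b] with [h' b'] in [U]: so [rho] is open.  For (1) <-> (2): the
   Fell-subbasic preimages are [r(U ∩ Iso(G))] and the complement of the
   compact [r(K ∩ Iso(G))] ([Iso(G)] is closed as [G] is Hausdorff), and
   conversely, testing lower semicontinuity on an open bisection around an
   isotropy arrow shows that [Iso(G)] is a neighbourhood of it.  Finally the
   groupoid operations descend along [rho] through representatives, and the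
   openness of [rho] transports continuity and the local homeomorphism
   property of [r] and [s] to the quotient. *)

Lemma open_map_nbhs {X Y : topologicalType} {f : X -> Y} {x : X} {A : set X} :
  open_map f -> nbhs x A -> nbhs (f x) (f @` A).
Proof.
move=> fo nA; apply: (@filterS _ _ _ (f @` A°)).
  by move=> _ [a Aa <-]; exists a => //; exact: interior_subset.
apply: open_nbhs_nbhs; split; first by apply: fo; exact: open_interior.
by exists x => //; exact: nbhs_interior.
Qed.

Lemma open_map_factor_continuous {X Y X' Y' : topologicalType}
    {p : X -> Y} {q : X' -> Y'} {F : X -> X'} {f : Y -> Y'} :
  open_map p -> (forall y, exists x, p x = y) -> continuous q -> continuous F ->
  (forall x, f (p x) = q (F x)) -> continuous f.
Proof.
move=> op p_surj cq cF fpE y W; have [x <-] := p_surj y; rewrite fpE => nW.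
have nx : nbhs x (F @^-1` (q @^-1` W)) by apply: cF; apply: cq.
by apply: filterS (open_map_nbhs op nx) => _ [x' Wx' <-]; rewrite /= fpE.
Qed.

Lemma closed_equalizer {X Y : topologicalType} {f g : X -> Y} :
  hausdorff_space Y -> continuous f -> continuous g ->
  closed [set x | f x = g x].
Proof.
move=> hY cf cg x clx; apply: hY => A B nA nB.
have nAB : nbhs x (f @^-1` A `&` g @^-1` B).
  by apply: filterI; [exact: cf | exact: cg].
have [y [fgy [Afy Bgy]]] := clx _ nAB.
by exists (f y); split => //; rewrite fgy.
Qed.

Section LocalHomeo.
Context {G : topologicalType} {X : set G} {f : G -> G}.
Context (f_lh : local_homeo_onto X f).

Lemma local_homeo_continuous : continuous f.
Proof.
move=> g; have [U [oU Ug _ cU _]] := f_lh.2 g.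
by move: cU; rewrite continuous_open_subspace // => /(_ g); apply; rewrite inE.
Qed.

Lemma local_homeo_open_map : open X -> open_map f.
Proof.
move=> oX V oV; rewrite openE => _ [g Vg <-].
have [U [oU Ug _ _ imU]] := f_lh.2 g.
have [W [oW imE]] := imU (V `&` U) (openI oV oU) (@subIsetr _ _ _).
have WXfg : (W `&` X) (f g) by rewrite -imE; exists g.
apply: filterS (open_nbhs_nbhs (conj (openI oW oX) WXfg)).
by rewrite -imE => _ [h [Vh _] <-]; exists h.
Qed.

End LocalHomeo.

Section Isotropy.
Context {G : topologicalType} (Gr : groupoid G).
Local Notation r := (grng Gr).
Local Notation s := (gsrc Gr).
Local Notation G0 := (gunit Gr).
Local Notation mul := (gmul Gr).

Lemma rng_rng g : r (r g) = r g. Proof. exact/unit_rng/rng_unit. Qed.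
Lemma src_rng g : s (r g) = r g. Proof. exact/unit_src/rng_unit. Qed.
Lemma rng_src g : r (s g) = s g. Proof. exact/unit_rng/src_unit. Qed.
Lemma src_src g : s (s g) = s g. Proof. exact/unit_src/src_unit. Qed.

Lemma unit_open : local_homeo_onto G0 r -> open G0.
Proof.
move=> r_lh; rewrite openE => u G0u.
have [U [oU Uu r_inj _ _]] := r_lh.2 u.
have nU : nbhs u U by apply: open_nbhs_nbhs.
have nrU : nbhs u (r @^-1` U).
  apply: (local_homeo_continuous r_lh).
  by rewrite unit_rng //; exact: open_nbhs_nbhs.
(* near [u], both [g] and [r g] lie in [U], on which [r] is injective *)
apply: filterS (filterI nU nrU) => g [Ug Urg].
by rewrite -(r_inj (r g) g) ?inE ?rng_rng //; exact: rng_unit.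
Qed.

Lemma eq_rho g h : rho Gr g = rho Gr h <-> r g = r h /\ s g = s h.
Proof.
split=> [/eqquotP/iso_orbit_relE // | /iso_orbit_relE gh].
exact/eqquotP.
Qed.

Lemma rho_repr (x : orbit_space Gr) : rho Gr (repr x) = x.
Proof. exact: reprK. Qed.

Lemma rho_preimage_units : rho Gr @^-1` (rho Gr @` G0) = Iso Gr.
Proof.
apply/seteqP; split => g /=.
  by case=> u G0u /eq_rho [ru su]; rewrite /Iso /= -ru -su unit_rng // unit_src.
move=> Isog; exists (r g); first exact: rng_unit.
by apply/eq_rho; rewrite rng_rng src_rng.
Qed.

(* A set is open in the quotient topology when its preimage under [rho] is. *)
Lemma open_Iso_units : open (Iso Gr) <-> open (rho Gr @` G0).
Proof. by rewrite -rho_preimage_units. Qed.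

Lemma mul_nbhs {g h : G} {U : set G} : topological_groupoid Gr ->
  s g = r h -> open U -> U (mul g h) ->
  exists P Q, [/\ nbhs g P, nbhs h Q &
    forall g' h', P g' -> Q h' -> s g' = r h' -> U (mul g' h')].
Proof.
move=> [mul_cont _] sgh oU Ugh.
have [|[P Q] /= [nP nQ] PQ] :=
  (subspace_continuousP _ _).1 mul_cont (g, h) sgh U (open_nbhs_nbhs _).
  by split.
by exists P, Q; split => // g' h' Pg' Qh' c; exact: (PQ (g', h')).
Qed.

Lemma open_Iso_rho_open : topological_groupoid Gr -> local_homeo_onto G0 r ->
  local_homeo_onto G0 s -> open (Iso Gr) -> open_map (rho Gr).
Proof.
move=> tG r_lh s_lh oIso U oU.
change (open (rho Gr @^-1` (rho Gr @` U))).
rewrite openE => h [g Ug /eq_rho [rgh sgh]].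
pose b := mul (ginv Gr h) g.
have hV_g : s (ginv Gr h) = r g by rewrite src_inv.
have hb : mul h b = g by rewrite -Defs.mulA ?rng_inv // Defs.mulgV -rgh mul_rng.
have rb : r b = s h by rewrite rng_mul ?rng_inv // src_inv.
have Isob : Iso Gr b by rewrite /Iso /= rb src_mul ?src_inv.
have Uhb : U (mul h b) by rewrite hb.
have [P [Q [nP nQ PQ]]] := mul_nbhs tG (esym rb) oU Uhb.
have oV : open (r @` (Q° `&` Iso Gr)).
  apply: (local_homeo_open_map r_lh (unit_open r_lh)).
  exact: openI (open_interior _) oIso.
have nV : nbhs h (s @^-1` (r @` (Q° `&` Iso Gr))).
  apply: (local_homeo_continuous s_lh); apply: open_nbhs_nbhs; split => //.
  by exists b => //; split => //; exact: nbhs_interior.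
apply: filterS (filterI nP nV) => h' [Ph' [b' [Qb' Isob'] rb']].
exists (mul h' b'); first by apply: PQ => //; exact: interior_subset.
by apply/eq_rho; rewrite rng_mul // src_mul // -Isob'.
Qed.

Lemma isotropy_disjointE (K : set G) :
  [set u | G0 u /\ isotropy Gr u `&` K = set0] = ~` (r @` (K `&` Iso Gr)) `&` G0.
Proof.
apply/seteqP; split => u /=; [case=> G0u uK | case=> uK G0u]; split => //.
  move=> [g [Kg Isog] rg]; suff : (isotropy Gr u `&` K) g by rewrite uK.
  by split => //; split => //; rewrite -Isog.
apply/seteqP; split => // g [[rg sg] Kg].
by apply: uK; exists g => //; split => //; rewrite /Iso /= rg sg.
Qed.

Lemma isotropy_meetsE (U : set G) :
  [set u | G0 u /\ isotropy Gr u `&` U !=set0] = r @` (U `&` Iso Gr) `&` G0.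
Proof.
apply/seteqP; split => u /=.
  case=> G0u [g [[rg sg] Ug]]; split => //.
  by exists g => //; split => //; rewrite /Iso /= rg sg.
case=> -[g [Ug Isog] <-] G0u; split => //.
by exists g; split => //; split => //; rewrite Isog.
Qed.

Lemma open_Iso_fell : hausdorff_space G -> local_homeo_onto G0 r ->
  local_homeo_onto G0 s -> open (Iso Gr) -> isotropy_fell_continuous Gr.
Proof.
move=> hG r_lh s_lh oIso; have cr := local_homeo_continuous r_lh.
split=> [K cK | U oU]; rewrite ?isotropy_disjointE ?isotropy_meetsE.
  exists (~` (r @` (K `&` Iso Gr))); split => //; rewrite openC.
  apply: compact_closed => //; apply: continuous_compact.
    exact: continuous_subspaceT.
  apply: compact_closedI => //; apply: closed_equalizer => //.
  exact: local_homeo_continuous s_lh.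
exists (r @` (U `&` Iso Gr)); split => //.
exact: (local_homeo_open_map r_lh (unit_open r_lh)) (openI oU oIso).
Qed.

Lemma fell_open_Iso : local_homeo_onto G0 r -> isotropy_fell_continuous Gr ->
  open (Iso Gr).
Proof.
move=> r_lh [_ lower]; rewrite openE => a Isoa.
have [U [oU Ua r_inj _ _]] := r_lh.2 a.
have [V [oV]] := lower U oU; rewrite isotropy_meetsE => imE.
have [Vra _] : (V `&` G0) (r a).
  by rewrite -imE; split; [exists a | exact: rng_unit].
have nV : nbhs a (r @^-1` V).
  by apply: (local_homeo_continuous r_lh); exact: open_nbhs_nbhs.
(* [r] is injective on the bisection [U], so the isotropy arrow of [U]
   over [r g] given by lower semicontinuity is [g] itself *)
apply: filterS (filterI (open_nbhs_nbhs (conj oU Ua)) nV) => g [Ug Vrg].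
have [[c [Uc Isoc] rc] _] : (r @` (U `&` Iso Gr) `&` G0) (r g).
  by rewrite imE; split => //; exact: rng_unit.
by rewrite -(r_inj c g) ?inE.
Qed.

Local Notation Q := (orbit_space Gr).
Local Notation rh := (rho Gr).

(* An orbit is determined by the range and source of any representative, so
   each groupoid law on [Q] reduces to an identity between these. *)
Definition rng_rep (x : Q) := r (repr x).
Definition src_rep (x : Q) := s (repr x).

Definition qunit : set Q := rh @` G0.
Definition qrng (x : Q) : Q := rh (r (repr x)).
Definition qsrc (x : Q) : Q := rh (s (repr x)).
Definition qinv (x : Q) : Q := rh (ginv Gr (repr x)).
Definition qmul (x y : Q) : Q :=
  if s (repr x) == r (repr y) then rh (mul (repr x) (repr y)) else x.

Lemma eq_rep (x y : Q) : rng_rep x = rng_rep y -> src_rep x = src_rep y -> x = y.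
Proof. by move=> rxy sxy; rewrite -(rho_repr x) -(rho_repr y); apply/eq_rho. Qed.

Lemma rng_rep_rho g : rng_rep (rh g) = r g.
Proof. by have /eq_rho [] := rho_repr (rh g). Qed.
Lemma src_rep_rho g : src_rep (rh g) = s g.
Proof. by have /eq_rho [] := rho_repr (rh g). Qed.

Lemma rng_rep_qrng x : rng_rep (qrng x) = rng_rep x.
Proof. by rewrite rng_rep_rho rng_rng. Qed.
Lemma src_rep_qrng x : src_rep (qrng x) = rng_rep x.
Proof. by rewrite src_rep_rho src_rng. Qed.
Lemma rng_rep_qsrc x : rng_rep (qsrc x) = src_rep x.
Proof. by rewrite rng_rep_rho rng_src. Qed.
Lemma src_rep_qsrc x : src_rep (qsrc x) = src_rep x.
Proof. by rewrite src_rep_rho src_src. Qed.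
Lemma rng_rep_qinv x : rng_rep (qinv x) = src_rep x.
Proof. by rewrite rng_rep_rho rng_inv. Qed.
Lemma src_rep_qinv x : src_rep (qinv x) = rng_rep x.
Proof. by rewrite src_rep_rho src_inv. Qed.

Lemma rng_rep_qmul x y : src_rep x = rng_rep y -> rng_rep (qmul x y) = rng_rep x.
Proof. by rewrite /qmul; case: eqP => // sxy _; rewrite rng_rep_rho rng_mul. Qed.
Lemma src_rep_qmul x y : src_rep x = rng_rep y -> src_rep (qmul x y) = src_rep y.
Proof. by rewrite /qmul; case: eqP => // sxy _; rewrite src_rep_rho src_mul. Qed.

Definition repE := (rng_rep_qrng, src_rep_qrng, rng_rep_qsrc, src_rep_qsrc,
  rng_rep_qinv, src_rep_qinv).

Lemma rep_composable x y : qsrc x = qrng y -> src_rep x = rng_rep y.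
Proof. by move=> xy; rewrite -rng_rep_qsrc xy rng_rep_qrng. Qed.

Lemma qunitP u : qunit u -> rng_rep u = src_rep u.
Proof.
by case=> v G0v <-; rewrite rng_rep_rho src_rep_rho unit_rng // unit_src.
Qed.

Lemma qrng_unit x : qunit (qrng x).
Proof. by exists (r (repr x)) => //; exact: rng_unit. Qed.
Lemma qsrc_unit x : qunit (qsrc x).
Proof. by exists (s (repr x)) => //; exact: src_unit. Qed.
Lemma qunit_rng u : qunit u -> qrng u = u.
Proof. by move=> /qunitP ru; apply: eq_rep; rewrite ?repE. Qed.
Lemma qunit_src u : qunit u -> qsrc u = u.
Proof. by move=> /qunitP ru; apply: eq_rep; rewrite ?repE. Qed.
Lemma qrng_mul x y : qsrc x = qrng y -> qrng (qmul x y) = qrng x.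
Proof.
by move=> /rep_composable xy; apply: eq_rep; rewrite ?repE rng_rep_qmul.
Qed.
Lemma qsrc_mul x y : qsrc x = qrng y -> qsrc (qmul x y) = qsrc y.
Proof.
by move=> /rep_composable xy; apply: eq_rep; rewrite ?repE src_rep_qmul.
Qed.
Lemma qmulA x y z : qsrc x = qrng y -> qsrc y = qrng z ->
  qmul (qmul x y) z = qmul x (qmul y z).
Proof.
move=> /rep_composable xy /rep_composable yz.
have xy_z : src_rep (qmul x y) = rng_rep z by rewrite src_rep_qmul.
have x_yz : src_rep x = rng_rep (qmul y z) by rewrite rng_rep_qmul.
by apply: eq_rep; rewrite ?rng_rep_qmul ?src_rep_qmul.
Qed.
Lemma qmul_rng x : qmul (qrng x) x = x.
Proof. by apply: eq_rep; rewrite ?rng_rep_qmul ?src_rep_qmul ?repE. Qed.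
Lemma qmul_src x : qmul x (qsrc x) = x.
Proof. by apply: eq_rep; rewrite ?rng_rep_qmul ?src_rep_qmul ?repE. Qed.
Lemma qrng_inv x : qrng (qinv x) = qsrc x.
Proof. by apply: eq_rep; rewrite ?repE. Qed.
Lemma qsrc_inv x : qsrc (qinv x) = qrng x.
Proof. by apply: eq_rep; rewrite ?repE. Qed.
Lemma qmulgV x : qmul x (qinv x) = qrng x.
Proof. by apply: eq_rep; rewrite ?rng_rep_qmul ?src_rep_qmul ?repE. Qed.
Lemma qmulVg x : qmul (qinv x) x = qsrc x.
Proof. by apply: eq_rep; rewrite ?rng_rep_qmul ?src_rep_qmul ?repE. Qed.

Definition orbit_groupoid : groupoid Q := Groupoid qrng_unit qsrc_unit
  qunit_rng qunit_src qrng_mul qsrc_mul qmulA qmul_rng qmul_src qrng_inv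
  qsrc_inv qmulgV qmulVg.

Lemma rho_groupoid_hom : groupoid_hom Gr orbit_groupoid rh.
Proof.
split=> // [g | g | g h gh | g]; apply: eq_rep => /=;
  rewrite ?rng_rep_qmul ?src_rep_qmul ?repE ?rng_rep_rho ?src_rep_rho
    ?rng_rng ?src_rng ?rng_src ?src_src ?rng_mul ?src_mul ?rng_inv ?src_inv //.
Qed.

Lemma rho_continuous : continuous rh.
Proof. exact: pi_continuous. Qed.

Lemma rho_surj (x : Q) : exists g, rh g = x.
Proof. by exists (repr x); exact: rho_repr. Qed.

Lemma local_homeo_orbit (f : G -> G) (qf : Q -> Q) : open_map rh -> open G0 ->
  local_homeo_onto G0 f -> (forall g, qf (rh g) = rh (f g)) ->
  local_homeo_onto qunit qf.
Proof.
move=> rho_open oG0 f_lh qfE; have cf := local_homeo_continuous f_lh.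
case: f_lh => fG0 f_lh; split=> [x | x].
  by rewrite -(rho_repr x) qfE; exists (f (repr x)).
have [U [oU Ux f_inj _ imU]] := f_lh (repr x).
exists (rh @` U); split.
- exact: rho_open.
- by exists (repr x) => //; exact: rho_repr.
- move=> y1 y2; rewrite !inE => -[g1 Ug1 <-] [g2 Ug2 <-].
  rewrite !qfE => /eq_rho [rf12 _].
  by rewrite (f_inj g1 g2) ?inE // -(unit_rng (fG0 g1)) rf12 unit_rng.
- apply: continuous_subspaceT.
  exact: open_map_factor_continuous rho_open rho_surj rho_continuous cf qfE.
move=> V oV VU.
have oUV : open (U `&` rh @^-1` V) by apply: openI => //; exact: open_comp.
have [W [oW imE]] := imU _ oUV (@subIsetl _ _ _).
have imVE : qf @` V = rh @` (W `&` G0).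
  rewrite -imE; apply/seteqP; split=> [_ [y Vy <-] | _ [_ [g [Ug Vg] <-] <-]].
    have [g Ug gy] := VU y Vy; subst y.
    by rewrite qfE; exists (f g) => //; exists g.
  by exists (rh g) => //; rewrite qfE.
exists (rh @` (W `&` G0)); split; first exact/rho_open/openI.
by rewrite imVE; apply/esym/setIidl => _ [u [_ G0u] <-]; exists u.
Qed.

Lemma qmul_continuous : open_map rh -> topological_groupoid Gr ->
  {within composable orbit_groupoid, continuous (fun p : Q * Q => qmul p.1 p.2)}.
Proof.
move=> rho_open tG; apply/subspace_continuousP.
move=> -[x y] /rep_composable /= sxy W; rewrite /from_subspace /=.
have -> : qmul x y = rh (mul (repr x) (repr y)).
  by rewrite /qmul ifT //; exact/eqP.
move=> /rho_continuous nW.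
have [P [P' [nP nP' PP']]] :=
  mul_nbhs tG sxy (@open_interior _ (rh @^-1` W)) nW.
exists (rh @` P, rh @` P') => /=.
  split; [rewrite -{1}(rho_repr x) | rewrite -{1}(rho_repr y)];
  exact: (open_map_nbhs rho_open).
move=> [_ _] /= [[a Pa <-] [b P'b <-]] /rep_composable.
rewrite src_rep_rho rng_rep_rho => ab.
have [_ _ _ rho_mul _] := rho_groupoid_hom.
move: (rho_mul a b ab) => /= <-.
by apply: (@interior_subset _ (rh @^-1` W)); exact: PP'.
Qed.

Lemma orbit_groupoid_etale : open_map rh -> etale_groupoid Gr ->
  etale_groupoid orbit_groupoid.
Proof.
move=> rho_open [tG [r_lh s_lh]]; have oG0 := unit_open r_lh.
have [_ qrngE qsrcE _ qinvE] := rho_groupoid_hom.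
split; split.
- exact: qmul_continuous.
- apply: open_map_factor_continuous rho_open rho_surj rho_continuous tG.2 _.
  by move=> g; rewrite qinvE.
- exact: local_homeo_orbit rho_open oG0 r_lh qrngE.
- exact: local_homeo_orbit rho_open oG0 s_lh qsrcE.
Qed.

End Isotropy.

Theorem lemma2p2 (G : topologicalType) (Gr : groupoid G) :
  hausdorff_space G -> locally_compact [set: G] -> @second_countable G ->
  etale_groupoid Gr ->
  [/\ (open (Iso Gr) <-> isotropy_fell_continuous Gr),
      (open (Iso Gr) <-> open (rho Gr @` gunit Gr)),
      (open (Iso Gr) <-> open_map (rho Gr)) &
      (open (Iso Gr) ->
         exists H : groupoid (orbit_space Gr),
           groupoid_hom Gr H (rho Gr) /\ etale_groupoid H)].
Proof.
move=> hG _ _ [tG [r_lh s_lh]].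
have Iso_rho_open : open (Iso Gr) <-> open_map (rho Gr).
  split=> [|rho_open]; first exact: open_Iso_rho_open.
  by apply/open_Iso_units/rho_open; exact: unit_open.
split=> //.
- by split; [exact: open_Iso_fell | exact: fell_open_Iso].
- exact: open_Iso_units.
- move=> oIso; exists (orbit_groupoid Gr); split; first exact: rho_groupoid_hom.
  by apply: orbit_groupoid_etale; [exact/Iso_rho_open | split].
Qed.
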